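(* Let $\kappa>0$ and $\tau=\inf\{m\ge0:r_m^2\le\kappa\}$. Then for every $m\ge0$, \[\|\widehat F^{(\tau)}-\widehat F^{(m)}\|_n^2\le\|\widehat F^{(m)}-f^*\|_n^2+2|c_m|+(\kappa-\|\varepsilon\|_n^2)\mathbf 1\{\tau<m\}+(\|\varepsilon\|_n^2+\Delta(r_\tau^2)-\kappa)\mathbf 1\{\tau>m\},\] where $\Delta(r_m^2)=r_{m-1}^2-r_m^2$.
   Context: Let $Y=f^*+\varepsilon\in\mathbb R^n$ with $f^*,\varepsilon\in\mathbb R^n$, and let $\mathbf X\in\mathbb R^{n\times p}$ have rank $n$ with columns $X^{(j)}$. $\langle a,b\rangle_n=n^{-1}\sum_ia_ib_i$, $\|\cdot\|_n$ its norm, $\|\varepsilon\|_n^2=n^{-1}\sum_i\varepsilon_i^2$. $\widehat\Pi_J$: $\langle\cdot,\cdot\rangle_n$-orthogonal projection onto $\mathrm{span}\{X^{(j)}:j\in J\}$. OMP: $\widehat F^{(0)}=0,\widehat J_0=\emptyset$, $\widehat j_{m+1}\in\arg\max_j|\langle Y-\widehat F^{(m)},X^{(j)}/\|X^{(j)}\|_n\rangle_n|$, $\widehat J_{m+1}=\widehat J_m\cup\{\widehat j_{m+1}\}$, $\widehat F^{(m+1)}=\widehat\Pi_{\widehat J_{m+1}}Y$; $\widehat\Pi_m=\widehat\Pi_{\widehat J_m}$; $r_m^2=\|Y-\widehat F^{(m)}\|_n^2$; cross term $c_m=\langle(I-\widehat\Pi_m)f^*,\varepsilon\rangle_n$. 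*)

From HB Require Import structures.
From mathcomp Require Import all_boot all_order all_algebra.
Set Implicit Arguments. Unset Strict Implicit. Unset Printing Implicit Defensive.
Import Order.TTheory GRing.Theory Num.Theory.
Local Open Scope ring_scope.

Definition ipn (R : realFieldType) (n : nat) (a b : 'cV[R]_n) : R :=
  n%:R^-1 * \sum_(i < n) a i 0 * b i 0.

Definition sqn (R : realFieldType) (n : nat) (a : 'cV[R]_n) : R := ipn a a.

Definition nrmn (R : rcfType) (n : nat) (a : 'cV[R]_n) : R := Num.sqrt (sqn a).

Definition in_span (R : realFieldType) (n p : nat) (X : 'M[R]_(n, p))
  (J : {set 'I_p}) (w : 'cV[R]_n) : Prop :=
  exists c : 'I_p -> R, w = \sum_(j in J) c j *: col j X.

(* w = \hat\Pi_J v : the <.,.>_n-orthogonal projection of v onto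
   span{ X^(j) : j in J } (characterised by membership + orthogonality) *)
Definition is_proj (R : realFieldType) (n p : nat) (X : 'M[R]_(n, p))
  (J : {set 'I_p}) (v w : 'cV[R]_n) : Prop :=
  in_span X J w /\ forall j, j \in J -> ipn (v - w) (col j X) = 0.

Definition Jsel (p : nat) (jsel : nat -> 'I_p) (m : nat) : {set 'I_p} :=
  [set jsel (nat_of_ord k) | k : 'I_m].

(* OMP path: jsel m is the index \hat j_{m+1} selected at step m+1, and
   F m = \hat F^{(m)} = \hat\Pi_{\hat J_m} Y. *)
Definition omp_path (R : rcfType) (n p : nat) (X : 'M[R]_(n, p))
  (Y : 'cV[R]_n) (jsel : nat -> 'I_p) (F : nat -> 'cV[R]_n) : Prop :=
  (forall m, is_proj X (Jsel jsel m) Y (F m)) /\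
  (forall m (j : 'I_p),
     `| ipn (Y - F m) ((nrmn (col j X))^-1 *: col j X) |
       <= `| ipn (Y - F m) ((nrmn (col (jsel m) X))^-1 *: col (jsel m) X) |).

From HB Require Import structures.
From mathcomp Require Import all_boot all_order all_algebra.
From mathcomp Require Import lra.

Set Implicit Arguments.
Unset Strict Implicit.
Unset Printing Implicit Defensive.
Import Order.TTheory GRing.Theory Num.Theory.
Local Open Scope ring_scope.

(* Write r_m^2 = ||Y - F_m||^2.  The fits F_m are projections of Y onto the
   nested spans of the selected columns, so Pythagoras gives
   ||F_l - F_k||^2 = r_k^2 - r_l^2 for k <= l.  Splitting F_m - f^* into
   F_m - Pf_m (in the span) and Pf_m - f^* (orthogonal to it) yields
   |r_m^2 - ||eps||^2| <= ||F_m - f^*||^2 + 2|c_m|.  Combined with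
   r_tau^2 <= kappa < r_(tau-1)^2 this gives the bound in each of the cases
   m < tau, m = tau, m > tau. *)

Section EmpiricalInnerProduct.
Variables (R : realFieldType) (n : nat).
Implicit Types a b c : 'cV[R]_n.

Lemma ipnC a b : ipn a b = ipn b a.
Proof. by rewrite /ipn; congr (_ * _); apply: eq_bigr => i _; rewrite mulrC. Qed.

Lemma ipnDl a b c : ipn (a + b) c = ipn a c + ipn b c.
Proof.
rewrite /ipn -mulrDr -big_split; congr (_ * _).
by apply: eq_bigr => i _; rewrite mxE mulrDl.
Qed.

Lemma ipnNl a c : ipn (- a) c = - ipn a c.
Proof.
rewrite /ipn -mulrN -sumrN; congr (_ * _).
by apply: eq_bigr => i _; rewrite mxE mulNr.
Qed.

Lemma ipnBl a b c : ipn (a - b) c = ipn a c - ipn b c.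
Proof. by rewrite ipnDl ipnNl. Qed.

Lemma ipnDr a b c : ipn c (a + b) = ipn c a + ipn c b.
Proof. by rewrite ipnC ipnDl ipnC (ipnC b). Qed.

Lemma ipnBr a b c : ipn c (a - b) = ipn c a - ipn c b.
Proof. by rewrite ipnC ipnBl ipnC (ipnC b). Qed.

Lemma ipnZr k a b : ipn a (k *: b) = k * ipn a b.
Proof.
rewrite /ipn mulrCA; congr (_ * _); rewrite mulr_sumr; apply: eq_bigr => i _.
by rewrite mxE mulrCA.
Qed.

Lemma ipn_sumr (I : finType) (P : pred I) a (g : I -> 'cV[R]_n) :
  ipn a (\sum_(j | P j) g j) = \sum_(j | P j) ipn a (g j).
Proof.
rewrite /ipn -mulr_sumr exchange_big; congr (_ * _); apply: eq_bigr => i _.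
by rewrite summxE mulr_sumr.
Qed.

Lemma sqn_ge0 a : 0 <= sqn a.
Proof.
rewrite /sqn /ipn mulr_ge0 ?invr_ge0 ?ler0n //.
by apply: sumr_ge0 => i _; rewrite -expr2 sqr_ge0.
Qed.

Lemma sqnN a : sqn (- a) = sqn a.
Proof. by rewrite /sqn ipnNl ipnC ipnNl opprK. Qed.

Lemma sqnB a b : sqn (a - b) = sqn a + sqn b - 2 * ipn a b.
Proof. rewrite /sqn ipnBl !ipnBr (ipnC b a); lra. Qed.

Lemma sqnD_orth a b : ipn a b = 0 -> sqn (a + b) = sqn a + sqn b.
Proof. by move=> ab0; rewrite /sqn ipnDl !ipnDr (ipnC b a) ab0 addr0 add0r. Qed.

End EmpiricalInnerProduct.

Section Projections.
Variables (R : realFieldType) (n p : nat) (X : 'M[R]_(n, p)).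
Implicit Types (J : {set 'I_p}) (v w : 'cV[R]_n).

Lemma in_spanB J w1 w2 : in_span X J w1 -> in_span X J w2 -> in_span X J (w1 - w2).
Proof.
move=> [c1 ->] [c2 ->]; exists (fun j => c1 j - c2 j).
by rewrite -sumrB; apply: eq_bigr => j _; rewrite scalerBl.
Qed.

Lemma in_span_subset J J' w : J \subset J' -> in_span X J w -> in_span X J' w.
Proof.
move=> sJJ' [c ->]; exists (fun j => if j \in J then c j else 0).
rewrite big_mkcond [RHS]big_mkcond; apply: eq_bigr => j _.
by case: ifP => [/(subsetP sJJ') -> | _]; last case: ifP; rewrite ?scale0r.
Qed.

Lemma is_proj_orth J v w s : is_proj X J v w -> in_span X J s -> ipn (v - w) s = 0.
Proof.
by move=> [_ orth] [c ->]; rewrite ipn_sumr big1 // => j Jj; rewrite ipnZr orth ?mulr0.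
Qed.

Lemma sqn_proj_nested J J' v w w' :
  J \subset J' -> is_proj X J v w -> is_proj X J' v w' ->
  sqn (v - w) = sqn (v - w') + sqn (w' - w).
Proof.
move=> sJJ' fit fit'; rewrite -sqnD_orth; first by rewrite addrA subrK.
apply: (is_proj_orth fit'); apply: in_spanB; first by case: fit'.
by apply: in_span_subset sJJ' _; case: fit.
Qed.

(* With r^2 := ||f + e - w||^2, one has
   r^2 - ||e||^2 = ||f - P||^2 - ||w - P||^2 + 2 <f - P, e>
   and ||w - f||^2 = ||f - P||^2 + ||w - P||^2. *)
Lemma sqn_residual_noise_gap J f e w P :
  is_proj X J (f + e) w -> is_proj X J f P ->
  `|sqn (f + e - w) - sqn e| <= sqn (w - f) + 2 * `|ipn (f - P) e|.
Proof.
move=> fit projP.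
have residual : f + e - w = e - (w - f) by rewrite opprB addrAC addrC.
set a := f - P; set b := w - P.
have span_b : in_span X J b by apply: in_spanB; [case: fit | case: projP].
have ab0 : ipn a b = 0 by apply: is_proj_orth projP span_b.
have w_sub_f : w - f = b - a by rewrite /a /b opprB subrKA.
rewrite w_sub_f in residual.
have res_b : ipn (e - (b - a)) b = 0.
  by rewrite -residual; apply: is_proj_orth fit span_b.
rewrite residual w_sub_f; clearbody a b.
have sqn_ba : sqn (b - a) = sqn a + sqn b.
  by rewrite addrC sqnD_orth ?sqnN // ipnNl ab0 oppr0.
have eb : ipn e b = sqn b.
  by move: res_b; rewrite !ipnBl ab0 subr0 => /eqP; rewrite subr_eq0 => /eqP.
rewrite sqnB sqn_ba ipnBr eb (ipnC e a).
have /andP[lbC ubC] : - `|ipn a e| <= ipn a e <= `|ipn a e| by rewrite -ler_norml.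
have a_ge0 := sqn_ge0 a; have b_ge0 := sqn_ge0 b.
by rewrite ler_norml; apply/andP; split; lra.
Qed.

End Projections.

Lemma Jsel_subset p (jsel : nat -> 'I_p) k l :
  (k <= l)%N -> Jsel jsel k \subset Jsel jsel l.
Proof.
move=> kl; apply/subsetP => _ /imsetP[i _ ->].
by apply/imsetP; exists (Ordinal (leq_trans (ltn_ord i) kl)).
Qed.

Theorem lemma2p2 (R : rcfType) (n p : nat) (X : 'M[R]_(n, p))
  (fstar eps : 'cV[R]_n) (jsel : nat -> 'I_p) (F : nat -> 'cV[R]_n)
  (Pf : nat -> 'cV[R]_n) (kappa : R) (tau : nat) :
  \rank X = n ->
  omp_path X (fstar + eps) jsel F ->
  (* Pf m = \hat\Pi_m f^* *)
  (forall m, is_proj X (Jsel jsel m) fstar (Pf m)) ->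
  0 < kappa ->
  (* tau = inf { m >= 0 : r_m^2 <= kappa } *)
  sqn (fstar + eps - F tau) <= kappa ->
  (forall m, (m < tau)%N -> kappa < sqn (fstar + eps - F m)) ->
  forall m : nat,
    sqn (F tau - F m)
      <= sqn (F m - fstar)
         + 2 * `| ipn (fstar - Pf m) eps |
         + (kappa - sqn eps) * (tau < m)%N%:R
         + (sqn eps
            + (sqn (fstar + eps - F tau.-1) - sqn (fstar + eps - F tau))
            - kappa) * (m < tau)%N%:R.
Proof.
move=> _ [fit _] projPf _ r_tau_le r_lt m.
have sqn_fitB k l : (k <= l)%N ->
    sqn (F l - F k) = sqn (fstar + eps - F k) - sqn (fstar + eps - F l).
  move=> kl; rewrite (sqn_proj_nested (Jsel_subset jsel kl) (fit k) (fit l)).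
  by rewrite [RHS]addrC addKr.
have := sqn_residual_noise_gap (fit m) (projPf m).
rewrite ler_norml => /andP[gap_lb gap_ub].
case: (ltngtP m tau) => [lt_m_tau | lt_tau_m | <-].
- rewrite !mulr_natr mulr0n mulr1n addr0.
  have tau_gt0 : (0 < tau)%N := leq_ltn_trans (leq0n m) lt_m_tau.
  have r_pred : kappa < sqn (fstar + eps - F tau.-1).
    by apply: r_lt; rewrite ltn_predL.
  rewrite (sqn_fitB _ _ (ltnW lt_m_tau)); lra.
- rewrite !mulr_natr mulr1n mulr0n addr0.
  rewrite -sqnN opprB (sqn_fitB _ _ (ltnW lt_tau_m)); lra.
- rewrite !mulr_natr !mulr0n !addr0.
  rewrite (sqn_fitB _ _ (leqnn m)) subrr; lra.
Qed.
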